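(* Let $\mathbf{P}\subset\mathbb{C}$ be a Jordan arc and let $A\colon\mathbf{P}\to\mathbb{C}^{n\times n}$, $B\colon\mathbf{P}\to\mathbb{C}^{n\times m}$ be continuous. Suppose that the Kronecker indices of $(A(\theta),B(\theta))$ are independent of $\theta$, say $\kappa(A(\theta),B(\theta))=(\kappa_1,\dots,\kappa_m)$ for all $\theta\in\mathbf{P}$, and that $\sum_{i=1}^m\kappa_i=n$. Then $(A,B)$ is restricted feedback equivalent on $\mathbf{P}$ to $(A_\kappa,B_\kappa)$, i.e. there exists a restricted feedback transformation $(T,F,S)$ on $\mathbf{P}$ with $(T,F,S)\cdot(A,B)=(A_\kappa,B_\kappa)$, equivalently $T(\theta)A(\theta)-A_\kappa T(\theta)=B_\kappa F(\theta)$ and $T(\theta)B(\theta)=B_\kappa S(\theta)$ for all $\theta\in\mathbf{P}$.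
   Context: A Jordan arc is the image of a continuous injective map from a compact interval into $\mathbb{C}$. For a pair $(A,B)\in\mathbb{C}^{n\times n}\times\mathbb{C}^{n\times m}$ with columns $b_1,\dots,b_m$ of $B$, the Kronecker indices $\kappa(A,B)=(\kappa_1,\dots,\kappa_m)$ are defined as follows: go through the list $b_1,\dots,b_m,Ab_1,\dots,Ab_m,A^2b_1,\dots,A^2b_m,\dots,A^{n-1}b_1,\dots,A^{n-1}b_m$ from left to right and select each vector that is linearly independent of the previously selected ones; the selected vectors are then of the form $b_i,Ab_i,\dots,A^{\kappa_i-1}b_i$ ($i=1,\dots,m$), which defines $\kappa_i$ ($\kappa_i=0$ if $b_i$ is not selected). The pair is reachable iff $\sum_i\kappa_i=n$. For $\kappa=(\kappa_1,\dots,\kappa_m)$ with $\sum\kappa_i=n$, $(A_\kappa,B_\kappa)$ is the pair with $A_\kappa=\mathrm{diag}(A_{\kappa_1},\dots,A_{\kappa_m})\in\mathbb{C}^{n\times n}$ (block diagonal) and $B_\kappa\in\mathbb{C}^{n\times m}$ block diagonal with blocks $b_{\kappa_1},\dots,b_{\kappa_m}$, where for $\kappa_i\ge1$, $A_{\kappa_i}\in\mathbb{C}^{\kappa_i\times\kappa_i}$ is the lower shift matrix (ones on the first subdiagonal, zeros elsewhere) and $b_{\kappa_i}=(1,0,\dots,0)^\top\in\mathbb{C}^{\kappa_i}$; if $\kappa_i=0$ the block $A_{\kappa_i}$ is absent and the $i$-th column of $B_\kappa$ is zero. Equivalently, the $i$-th column of $B_\kappa$ is $e_{1+\kappa_1+\dots+\kappa_{i-1}}$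 when $\kappa_i\ge1$. A restricted feedback transformation on $\mathbf{P}$ is a triple $(T,F,S)$ of continuous maps $T\colon\mathbf{P}\to\mathbb{C}^{n\times n}$, $F\colon\mathbf{P}\to\mathbb{C}^{m\times n}$, $S\colon\mathbf{P}\to\mathbb{C}^{m\times m}$ such that for every $\theta$, $T(\theta)$ is invertible and $S(\theta)$ is upper triangular with all diagonal entries equal to $1$. It acts on pairs of continuous maps by $(T,F,S)\cdot(A,B)=\big(T(A-BS^{-1}F)T^{-1},\,TBS^{-1}\big)$, pointwise in $\theta$. Two pairs are restricted feedback equivalent on $\mathbf{P}$ if one is obtained from the other by such an action. *)

From HB Require Import structures.
From mathcomp Require Import all_boot all_order all_algebra.
From mathcomp Require Import complex.
From mathcomp Require Import all_classical all_reals all_analysis.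
Export numFieldTopology.Exports numFieldNormedType.Exports.

Set Implicit Arguments.
Unset Strict Implicit.
Unset Printing Implicit Defensive.

Import Order.TTheory GRing.Theory Num.Theory.
Import ComplexField.
Local Open Scope classical_set_scope.
Local Open Scope ring_scope.

(* Topology on R[i]: the metric topology of the modulus (generic instance
   for numClosedFieldType, made canonical on R[i]). *)
HB.instance Definition _ (R : rcfType) :=
  PseudoPointedMetric.copy R[i] (R[i] : numClosedFieldType)^o.

Definition jordan_arc (R : realType) (P : set R[i]) : Prop :=
  exists g : R -> R[i],
    [/\ {within `[0, 1], continuous g},
        (forall s t : R, 0 <= s <= 1 -> 0 <= t <= 1 -> g s = g t -> s = t) &
        P = g @` `[0, 1]].

Section Kronecker.
Variables (K : fieldType) (n m : nat).

(* Greedy left-to-right selection: a vector (labelled by its column index)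
   is selected iff it is linearly independent of (i.e. not in the span of)
   the previously selected vectors; [acc] spans the selected vectors. *)
Fixpoint greedy_select (acc : 'M[K]_n) (s : seq ('I_m * 'rV[K]_n))
  : seq ('I_m * bool) :=
  match s with
  | [::] => [::]
  | p :: s' =>
      let b := ~~ (p.2 <= acc)%MS in
      (p.1, b) :: greedy_select (if b then (acc + p.2)%MS else acc) s'
  end.

Definition krylov_list (A : 'M[K]_n) (B : 'M[K]_(n, m))
  : seq ('I_m * 'rV[K]_n) :=
  flatten [seq [seq (i, (A ^+ j *m col i B)^T) | i <- enum 'I_m]
          | j <- iota 0 n].

Definition kronecker_indices (A : 'M[K]_n) (B : 'M[K]_(n, m)) : 'I_m -> nat :=
  fun i => count (fun p => (p.1 == i) && p.2)
                 (greedy_select 0 (krylov_list A B)).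

(* Offsets kappa_1 + ... + kappa_(i-1) (0-based row index of block i). *)
Definition kappa_offset (kappa : 'I_m -> nat) (i : 'I_m) : nat :=
  (\sum_(j < m | (j < i)%N) kappa j)%N.

(* A_kappa: block-diagonal lower shift matrices of sizes kappa_i. *)
Definition A_kappa (kappa : 'I_m -> nat) : 'M[K]_n :=
  \matrix_(r < n, c < n)
    if (r == c.+1 :> nat) &&
       [exists i : 'I_m, (kappa_offset kappa i <= c)%N &&
                         (c.+1 < kappa_offset kappa i + kappa i)%N]
    then 1 else 0.

Definition B_kappa (kappa : 'I_m -> nat) : 'M[K]_(n, m) :=
  \matrix_(r < n, i < m)
    if (kappa i != 0%N) && (r == kappa_offset kappa i :> nat) then 1 else 0.

End Kronecker.

Section Feedback.
Variables (R : realType) (n m : nat).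

Definition restricted_feedback_transformation (P : set R[i])
    (T : R[i] -> 'M[R[i]]_n) (F : R[i] -> 'M[R[i]]_(m, n))
    (S : R[i] -> 'M[R[i]]_m) : Prop :=
  [/\ {within P, continuous T}, {within P, continuous F},
      {within P, continuous S} &
      forall theta, P theta ->
        [/\ T theta \in unitmx,
            (forall i j : 'I_m, (j < i)%N -> S theta i j = 0) &
            (forall i : 'I_m, S theta i i = 1)]].

Definition feedback_act_A (T : 'M[R[i]]_n) (F : 'M[R[i]]_(m, n))
    (S : 'M[R[i]]_m) (A : 'M[R[i]]_n) (B : 'M[R[i]]_(n, m)) : 'M[R[i]]_n :=
  T *m (A - B *m invmx S *m F) *m invmx T.

Definition feedback_act_B (T : 'M[R[i]]_n) (S : 'M[R[i]]_m)
    (B : 'M[R[i]]_(n, m)) : 'M[R[i]]_(n, m) :=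
  T *m B *m invmx S.

End Feedback.

(* Luenberger's construction of the Brunovsky form, done uniformly in theta.
   Since the Kronecker indices are constant, the selected Krylov vectors
   A^k b_l (k < kappa_l) form a basis U of C^n at every theta, ordered chain by
   chain.  Let q_i be the i-th dual vector picking out the last vector
   A^(kappa_i - 1) b_i of chain i.  The rows q_i^T A^(kappa_i - 1 - j) give T,
   the coefficients q_i^T A^(kappa_i - 1) B give an upper unitriangular S, and
   T A - A_kappa T is supported on the first row of each block, which defines F.
   All three are polynomial in the entries of A, B and of U^-1, and det U never
   vanishes. *)

From HB Require Import structures.
From mathcomp Require Import all_boot all_order all_algebra.
From mathcomp Require Import complex.
From mathcomp Require Import all_classical all_reals all_analysis.
From mathcomp Require Import fingroup perm zify.
Import Order.TTheory GRing.Theory Num.Theory.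
Import ComplexField.
Set Implicit Arguments.
Unset Strict Implicit.
Unset Printing Implicit Defensive.

Local Open Scope classical_set_scope.
Local Open Scope ring_scope.

Section MatrixConvergence.
Context {K : numFieldType} {T : Type} {F : set_system T} {FF : Filter F}.

Lemma cvg_mxP p q (M : T -> 'M[K]_(p, q)) (L : 'M[K]_(p, q)) :
  M @ F --> L <-> forall i j, (fun t => M t i j) @ F --> L i j.
Proof.
split=> [ML i j|ML].
  exact: (continuous_cvg _ (@coord_continuous K p q i j L) ML).
move=> U [V nbhsV sub].
have : \forall t \near F, forall ij : 'I_p * 'I_q, V ij.1 ij.2 (M t ij.1 ij.2).
  by apply: filter_forall => -[i j]; exact: (ML i j _ (nbhsV i j)).
by apply: filterS => t Vt; apply: sub => i j; exact: (Vt (i, j)).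
Qed.

Lemma cvg_mx_entry p q (M : T -> 'M[K]_(p, q)) (L : 'M[K]_(p, q)) i j :
  M @ F --> L -> (fun t => M t i j) @ F --> L i j.
Proof. by move/cvg_mxP; apply. Qed.

Lemma cvg_matrix p q (f : T -> 'I_p -> 'I_q -> K) (l : 'I_p -> 'I_q -> K) :
  (forall i j, (fun t => f t i j) @ F --> l i j) ->
  (fun t => \matrix_(i, j) f t i j) @ F --> \matrix_(i, j) l i j.
Proof.
move=> fl; apply/cvg_mxP => i j; rewrite mxE.
by under eq_cvg do rewrite mxE; exact: fl.
Qed.

Lemma cvg_sumr (I : Type) (r : seq I) (P : pred I) (f : I -> T -> K) (a : I -> K) :
  (forall i, P i -> f i @ F --> a i) ->
  (fun t => \sum_(i <- r | P i) f i t) @ F --> \sum_(i <- r | P i) a i.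
Proof. by move=> fa; apply: cvg_big => //; exact: add_continuous. Qed.

Lemma cvg_prodr (I : Type) (r : seq I) (P : pred I) (f : I -> T -> K) (a : I -> K) :
  (forall i, P i -> f i @ F --> a i) ->
  (fun t => \prod_(i <- r | P i) f i t) @ F --> \prod_(i <- r | P i) a i.
Proof. by move=> fa; apply: cvg_big => //; exact: mul_continuous. Qed.

Lemma cvg_mulmx p q r (M : T -> 'M[K]_(p, q)) (N : T -> 'M[K]_(q, r))
    (LM : 'M[K]_(p, q)) (LN : 'M[K]_(q, r)) :
  M @ F --> LM -> N @ F --> LN -> (fun t => M t *m N t) @ F --> LM *m LN.
Proof.
move=> /cvg_mxP MLM /cvg_mxP NLN; apply/cvg_mxP => i j; rewrite mxE.
under eq_cvg do rewrite mxE.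
by apply: cvg_sumr => k _; apply: cvgM.
Qed.

Lemma cvg_trmx p q (M : T -> 'M[K]_(p, q)) (L : 'M[K]_(p, q)) :
  M @ F --> L -> (fun t => (M t)^T) @ F --> L^T.
Proof.
move=> /cvg_mxP ML; apply/cvg_mxP => i j; rewrite mxE.
by under eq_cvg do rewrite mxE; exact: ML.
Qed.

Lemma cvg_col p q (M : T -> 'M[K]_(p, q)) (L : 'M[K]_(p, q)) j :
  M @ F --> L -> (fun t => col j (M t)) @ F --> col j L.
Proof.
move=> /cvg_mxP ML; apply/cvg_mxP => i k; rewrite mxE.
by under eq_cvg do rewrite mxE; exact: ML.
Qed.

Lemma cvg_mxexp p (M : T -> 'M[K]_p) (L : 'M[K]_p) k :
  M @ F --> L -> (fun t => M t ^+ k) @ F --> L ^+ k.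
Proof.
move=> ML; elim: k => [|k IHk].
  by rewrite expr0; under eq_cvg do rewrite expr0; exact: cvg_cst.
by rewrite exprS -mulmxE; under eq_cvg do rewrite exprS -mulmxE; exact: cvg_mulmx.
Qed.

Lemma cvg_det p (M : T -> 'M[K]_p) (L : 'M[K]_p) :
  M @ F --> L -> (fun t => \det (M t)) @ F --> \det L.
Proof.
move=> /cvg_mxP ML; apply: cvg_sumr => s _.
by apply: cvgM; [exact: cvg_cst | apply: cvg_prodr => i _; exact: ML].
Qed.

Lemma cvg_adj p (M : T -> 'M[K]_p) (L : 'M[K]_p) :
  M @ F --> L -> (fun t => \adj (M t)) @ F --> \adj L.
Proof.
move=> /cvg_mxP ML; apply/cvg_mxP => i j; rewrite mxE.
under eq_cvg do rewrite mxE.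
apply: cvgM; first exact: cvg_cst.
apply: cvg_det; apply/cvg_mxP => a b; rewrite !mxE.
by under eq_cvg do rewrite !mxE; exact: ML.
Qed.

Lemma cvg_invmx p (M : T -> 'M[K]_p) (L : 'M[K]_p) :
  L \in unitmx -> M @ F --> L -> (fun t => invmx (M t)) @ F --> invmx L.
Proof.
rewrite unitmxE unitfE => detL ML.
have detM := cvg_det ML.
apply: cvg_trans (near_eq_cvg _) _.
  near=> t; rewrite /invmx unitmxE unitfE.
  suff -> : \det (M t) != 0 by [].
  by near: t; exact: cvgr_neq0 detM detL.
rewrite /invmx unitmxE unitfE detL /=.
apply/cvg_mxP => i j; rewrite mxE.
under eq_cvg do rewrite mxE.
apply: cvgM; first exact: cvgV.
by move/cvg_mxP: (cvg_adj ML); apply.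
Unshelve. all: by end_near.
Qed.

End MatrixConvergence.

Lemma size_flatten_const (X : Type) (f : nat -> seq X) m c a :
  (forall j, size (f j) = m) ->
  size (flatten [seq f j | j <- iota a c]) = (c * m)%N.
Proof.
move=> size_f; elim: c a => [|c IHc] a //=.
by rewrite size_cat size_f IHc mulSn.
Qed.

Lemma nth_flatten_const (X : Type) (d : X) (f : nat -> seq X) m c a p :
  (forall j, size (f j) = m) -> (p < c * m)%N ->
  nth d (flatten [seq f j | j <- iota a c]) p = nth d (f (a + p %/ m)%N) (p %% m).
Proof.
move=> size_f; elim: c a p => [|c IHc] a p //= lt_p.
have m_gt0 : (0 < m)%N by move: lt_p; rewrite mulSn; case: (m) => //; lia.
rewrite nth_cat size_f; case: ltnP => le_mp.
  by rewrite divn_small // modn_small // addn0.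
rewrite IHc; last by move: lt_p; rewrite mulSn; lia.
have -> : (p %/ m = (p - m) %/ m + 1)%N by rewrite -[in LHS](subnK le_mp) -{2}(mul1n m) divnDMl.
have -> : (p %% m = (p - m) %% m)%N by rewrite -[in LHS](subnK le_mp) modnDr.
by rewrite addnA addn1.
Qed.

Lemma initial_segment_sumE (f : nat -> bool) N :
  (forall k, (k.+1 < N)%N -> ~~ f k -> ~~ f k.+1) ->
  forall k, (k < N)%N -> f k = (k < \sum_(0 <= j < N) f j)%N.
Proof.
elim: N => [//|N IHN] f_dec k lt_kN.
have sum_le : (\sum_(0 <= j < N) f j <= N)%N.
  rewrite -[X in (_ <= X)%N]subn0 -[X in (_ <= X)%N]muln1 -sum_nat_const_nat.
  by apply: leq_sum => j _; exact: leq_b1.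
rewrite big_nat_recr //=.
case fN: (f N); last first.
  rewrite addn0; case: (ltngtP k N) => [lt_kN'||->]; last 2 first.
  - by move: lt_kN; lia.
  - by rewrite fN; apply/esym/negbTE; rewrite -leqNgt.
  by apply: IHN => // j lt_j; apply: f_dec; lia.
have f_le_N j : (j <= N)%N -> f j.
  move=> le_jN; apply/negPn/negP => fj.
  suff : forall i, (j + i <= N)%N -> ~~ f (j + i)%N.
    by move/(_ (N - j)%N); rewrite subnKC // fN => /(_ (leqnn N)).
  elim=> [|i IHi] le_ji; first by rewrite addn0.
  by rewrite addnS; apply: f_dec; [lia | apply: IHi; lia].
have -> : (\sum_(0 <= j < N) f j = N)%N.
  rewrite (eq_big_nat _ _ (F2 := fun _ => 1%N)) ?sum_nat_const_nat ?muln1 ?subn0 //.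
  by move=> j /andP[_ lt_jN]; rewrite f_le_N // ltnW.
by rewrite addn1 lt_kN f_le_N // -ltnS.
Qed.

Lemma perm_key_le_id n (key : 'I_n -> nat) (s : 'S_n) :
  injective key -> (forall r, key r <= key (s r))%N -> s = 1%g.
Proof.
move=> key_inj key_le.
have sum_key : (\sum_r key (s r) = \sum_r key r)%N.
  by rewrite [RHS](reindex_inj (@perm_inj _ s)).
have : (\sum_r (key (s r) - key r) == 0)%N by rewrite sumnB // sum_key subnn.
rewrite sum_nat_eq0 => /forallP key_eq; apply/permP => r; rewrite perm1.
have /= := key_eq r; rewrite subn_eq0 => le_sr.
by apply: key_inj; apply/eqP; rewrite eqn_leq le_sr key_le.
Qed.

Lemma det_trig_key (R : comNzRingType) n (M : 'M[R]_n) (key : 'I_n -> nat) :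
  injective key -> (forall r c, (key c < key r)%N -> M r c = 0) ->
  \det M = \prod_r M r r.
Proof.
move=> key_inj M_trig; rewrite /determinant (bigD1 (1%g : 'S_n)) //= odd_perm1 expr0 mul1r.
rewrite [X in _ + X]big1 ?addr0 => [|s s_neq1]; first by under eq_bigr do rewrite perm1.
have [r lt_sr] : exists r, (key (s r) < key r)%N.
  apply/existsP; apply: contraR s_neq1 => /existsPn key_le.
  apply/eqP; apply: (perm_key_le_id key_inj) => r.
  by rewrite leqNgt key_le.
by rewrite (bigD1 r) //= M_trig // mul0r mulr0.
Qed.

Section Blocks.
Variables (m n : nat) (kappa : 'I_m -> nat).
Local Notation offset := (kappa_offset kappa).

Definition partial_sum (t : nat) : nat := (\sum_(j < m | (j < t)%N) kappa j)%N.

Lemma partial_sumS (i : 'I_m) : partial_sum i.+1 = (partial_sum i + kappa i)%N.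
Proof.
rewrite /partial_sum (bigD1 i) //= addnC; congr (_ + _)%N.
by apply: eq_bigl => j; rewrite ltnS ltn_neqAle andbC.
Qed.

Lemma partial_sum_mono : {homo partial_sum : t t' / (t <= t')%N}.
Proof.
move=> t t' le_tt'; rewrite /partial_sum [X in (_ <= X)%N]big_mkcond [X in (X <= _)%N]big_mkcond.
by apply: leq_sum => j _; case: ifP => //= lt_jt; rewrite (leq_trans lt_jt).
Qed.

Definition in_block (i : 'I_m) (r : nat) : bool := (offset i <= r < offset i + kappa i)%N.

Lemma block_end_le_offset (i i' : 'I_m) : (i < i')%N -> (offset i + kappa i <= offset i')%N.
Proof. by move=> lt_ii'; rewrite -partial_sumS partial_sum_mono. Qed.

Lemma in_block_inj (i i' : 'I_m) (r : nat) : in_block i r -> in_block i' r -> i = i'.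
Proof.
rewrite /in_block => /andP[le_ir lt_ri] /andP[le_i'r lt_ri'].
by case: (ltngtP i i') => [/block_end_le_offset|/block_end_le_offset|/val_inj //]; lia.
Qed.

Lemma in_block_kappa_gt0 (i : 'I_m) r : in_block i r -> (0 < kappa i)%N.
Proof. by rewrite /in_block; lia. Qed.

Lemma in_block_offsetD (i : 'I_m) k : (k < kappa i)%N -> in_block i (offset i + k).
Proof. by rewrite /in_block; lia. Qed.

Hypothesis sum_kappa : (\sum_(i < m) kappa i)%N = n.

Lemma partial_sum_m : partial_sum m = n.
Proof. by rewrite /partial_sum -sum_kappa; apply: eq_bigl => j; rewrite ltn_ord. Qed.

Lemma block_end_le (i : 'I_m) : (offset i + kappa i <= n)%N.
Proof. by rewrite -partial_sumS -partial_sum_m partial_sum_mono. Qed.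

Lemma kappa_le (i : 'I_m) : (kappa i <= n)%N.
Proof. by have := block_end_le i; lia. Qed.

Lemma in_block_exists (r : nat) : (r < n)%N -> exists i, in_block i r.
Proof.
rewrite -partial_sum_m.
suff : forall t, (t <= m)%N -> (r < partial_sum t)%N -> exists i, in_block i r.
  exact.
elim=> [|t IHt] le_tm; first by rewrite /partial_sum big_pred0.
rewrite (partial_sumS (Ordinal le_tm)) /=.
case: (ltnP r (partial_sum t)) => [lt_r _|le_r lt_r]; first exact: IHt (ltnW le_tm) lt_r.
by exists (Ordinal le_tm); rewrite /in_block le_r lt_r.
Qed.

Lemma in_block_lt (i : 'I_m) r : in_block i r -> (r < n)%N.
Proof. by move=> /andP[_ lt_r]; exact: leq_trans lt_r (block_end_le i). Qed.

Definition block_of (r : 'I_n) : 'I_m := xchoose (in_block_exists (ltn_ord r)).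

Lemma block_ofP (r : 'I_n) : in_block (block_of r) r.
Proof. exact: (xchooseP (in_block_exists (ltn_ord r))). Qed.

Lemma block_of_eq (r : 'I_n) i : in_block i r -> block_of r = i.
Proof. exact: in_block_inj (block_ofP r). Qed.

End Blocks.

Section GreedySelection.
Variables (K : fieldType) (n m : nat).
Implicit Types (s t : seq ('I_m * 'rV[K]_n)) (acc : 'M[K]_n).

Fixpoint span_seq t : 'M[K]_n :=
  if t is q :: t' then (q.2 + span_seq t')%MS else 0.

Lemma span_seq_sub p t (X : 'M[K]_(p, n)) :
  (forall q, q \in t -> (q.2 <= X)%MS) -> (span_seq t <= X)%MS.
Proof.
elim: t => [|q t IHt] sub_tX /=; first exact: sub0mx.
rewrite addsmx_sub sub_tX ?mem_head //=.
by apply: IHt => q' q't; apply: sub_tX; rewrite inE q't orbT.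
Qed.

Lemma span_seq_sup t q : q \in t -> (q.2 <= span_seq t)%MS.
Proof.
elim: t => [//|q' t IHt]; rewrite inE => /orP[/eqP ->|qt] /=.
  exact: addsmxSl.
exact: submx_trans (IHt qt) (addsmxSr _ _).
Qed.

Lemma span_seq_mulmx_sub p t (C : 'M[K]_n) (X : 'M[K]_(p, n)) :
  (forall q, q \in t -> (q.2 *m C <= X)%MS) -> (span_seq t *m C <= X)%MS.
Proof.
elim: t => [|q t IHt] sub_tX /=; first by rewrite mul0mx sub0mx.
rewrite addsmxMr addsmx_sub sub_tX ?mem_head //=.
by apply: IHt => q' q't; apply: sub_tX; rewrite inE q't orbT.
Qed.

Lemma size_greedy_select s acc : size (greedy_select acc s) = size s.
Proof. by elim: s acc => [|q s IHs] acc //=; rewrite IHs. Qed.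

Lemma nth_greedy_select s acc p d dg : (p < size s)%N ->
  nth dg (greedy_select acc s) p =
  ((nth d s p).1, ~~ ((nth d s p).2 <= acc + span_seq (take p s))%MS).
Proof.
elim: s acc p => [//|q s IHs] acc [|p] /= lt_ps; first by rewrite addsmx0.
rewrite IHs //; congr (_, ~~ _).
case: ifP => [_|/negbFE q_acc]; first by rewrite addsmxA.
by rewrite addsmxA (adds_eqmx (addsmx_idPl q_acc) (eqmx_refl _)).
Qed.

Lemma rank_greedy_select s acc :
  \rank (acc + span_seq s)%MS = (\rank acc + count snd (greedy_select acc s))%N.
Proof.
elim: s acc => [|q s IHs] acc /=; first by rewrite addsmx0 addn0.
case: ifP => q_acc /=; last first.
  move/negbFE: q_acc => q_acc.
  by rewrite addsmxA (adds_eqmx (addsmx_idPl q_acc) (eqmx_refl _)) IHs add0n.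
rewrite addsmxA IHs addnA; congr (_ + _)%N.
apply/eqP; rewrite eqn_leq; apply/andP; split.
  apply: leq_trans (mxrank_adds_leqif acc q.2) _.
  by rewrite leq_add2l rank_leq_row.
have : (acc < acc + q.2)%MS by rewrite ltmxE addsmxSl addsmx_sub submx_refl q_acc.
by rewrite ltmxErank addn1 => /andP[].
Qed.

End GreedySelection.

Lemma count_sum_fst (I : finType) (X : Type) (s : seq (I * X)) (a : pred (I * X)) :
  count a s = (\sum_l count (fun q => (q.1 == l) && a q) s)%N.
Proof.
elim: s => [|q s IHs] /=; first by rewrite big1.
rewrite big_split /= IHs; congr (_ + _)%N.
rewrite (bigD1 q.1) //= eqxx /= big1 ?addn0 // => l /negPf.
by rewrite eq_sym => ->.
Qed.

Section KrylovList.
Variables (K : fieldType) (n m : nat) (A : 'M[K]_n) (B : 'M[K]_(n, m)).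

Definition krylov_vec (k : nat) (l : 'I_m) : 'rV[K]_n := (A ^+ k *m col l B)^T.

Local Notation L := (krylov_list A B).
Local Notation x := krylov_vec.

Lemma krylov_vecS k l : x k.+1 l = x k l *m A^T.
Proof. by rewrite /krylov_vec exprS -mulmxE -mulmxA trmx_mul. Qed.

Lemma size_krylov_list : size L = (n * m)%N.
Proof. by rewrite (size_flatten_const (m := m)) // => j; rewrite size_map size_enum_ord. Qed.

Lemma nth_krylov_list p d : (p < n * m)%N ->
  exists l : 'I_m, val l = (p %% m)%N /\ nth d L p = (l, x (p %/ m) l).
Proof.
move=> lt_p; have m_gt0 : (0 < m)%N by case: (m) lt_p; lia.
rewrite /krylov_list (nth_flatten_const _ (m := m)) //; last first.
  by move=> j; rewrite size_map size_enum_ord.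
pose l := Ordinal (ltn_pmod p m_gt0); exists l; split => //.
by rewrite (nth_map l) ?size_enum_ord ?ltn_pmod // (nth_ord_enum _ l).
Qed.

Lemma nth_krylov_list_pos k (l : 'I_m) d : (k < n)%N -> nth d L (k * m + l) = (l, x k l).
Proof.
move=> lt_kn; have m_gt0 : (0 < m)%N by case: (m) l => [[]|].
have lt_nm : (k * m + l < n * m)%N by have := ltn_ord l; nia.
have [l' [l'E ->]] := nth_krylov_list d lt_nm.
rewrite modnMDl modn_small // in l'E.
by rewrite divnMDl // divn_small ?addn0 // (val_inj l'E).
Qed.

Lemma mem_take_krylov_list p q : q \in take p L ->
  exists k (l : 'I_m), [/\ (k < n)%N, (k * m + l < p)%N & q = (l, x k l)].
Proof.
move=> /(nthP q) [j]; rewrite size_take size_krylov_list => lt_j.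
have lt_jp : (j < p)%N by move: lt_j; case: ifP => //; lia.
have lt_jnm : (j < n * m)%N by move: lt_j; case: ifP => //; lia.
rewrite nth_take // => <-.
have [l [lE ->]] := nth_krylov_list q lt_jnm.
have m_gt0 : (0 < m)%N by case: (m) l {lE} => [[]|].
by exists (j %/ m)%N, l; rewrite ltn_divLR // lE -divn_eq.
Qed.

Lemma krylov_in_take p k (l : 'I_m) : (k < n)%N -> (k * m + l < p)%N ->
  (l, x k l) \in take p L.
Proof.
move=> lt_kn lt_p; have lt_nm : (k * m + l < n * m)%N by have := ltn_ord l; nia.
apply/(nthP (l, x k l)); exists (k * m + l)%N.
  by rewrite size_take size_krylov_list; case: ifP => //; lia.
by rewrite nth_take // nth_krylov_list_pos.
Qed.

End KrylovList.

Section Selection.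
Variables (K : fieldType) (n m : nat) (A : 'M[K]_n) (B : 'M[K]_(n, m)).

Local Notation L := (krylov_list A B).
Local Notation x := (krylov_vec A B).

(* [x k l] sits at position [k * m + l] of the Krylov list. *)
Definition selected k (l : 'I_m) : bool := ~~ (x k l <= span_seq (take (k * m + l) L))%MS.

Lemma kronecker_indices_selected l :
  kronecker_indices A B l = (\sum_(0 <= k < n) selected k l)%N.
Proof.
rewrite /kronecker_indices; set g := greedy_select 0 L; pose dg := (l, false).
rewrite -(mkseq_nth dg g) /g size_greedy_select size_krylov_list /mkseq count_map.
suff count_upto k : (k <= n)%N ->
    count (preim (nth dg (greedy_select 0 L)) (fun q => (q.1 == l) && q.2)) (iota 0 (k * m))
    = (\sum_(0 <= k' < k) selected k' l)%N by exact: count_upto.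
elim: k => [|k IHk] le_kn; first by rewrite big_nil.
rewrite mulSn addnC iotaD count_cat IHk ?(ltnW le_kn) // big_nat_recr //= add0n.
congr (_ + _)%N.
have -> : iota (k * m) m = map (addn (k * m)) (map val (enum 'I_m)).
  by rewrite val_enum_ord -iotaDl addn0.
rewrite !count_map.
have selE (j : 'I_m) : ((preim (nth dg (greedy_select 0 L)) (fun q => (q.1 == l) && q.2)
    \o addn (k * m)) \o val) j = (j == l) && selected k l.
  have lt_jL : (k * m + j < size L)%N by rewrite size_krylov_list; have := ltn_ord j; nia.
  rewrite /= (nth_greedy_select 0 (l, x 0 l)) //= nth_krylov_list_pos //= adds0mx.
  by case: eqP => [->|].
rewrite (eq_count selE); case: (selected k l); last first.
  by rewrite (eq_count (a2 := pred0)) ?count_pred0 // => j; rewrite andbF.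
rewrite (eq_count (a2 := pred1 l)); last by move=> j; rewrite andbT.
by rewrite -enumT count_uniq_mem ?enum_uniq ?mem_enum.
Qed.

Lemma selected_succ k l : (k.+1 < n)%N -> ~~ selected k l -> ~~ selected k.+1 l.
Proof.
rewrite /selected !negbK => lt_kn x_sub.
rewrite krylov_vecS; apply: submx_trans (submxMr _ x_sub) _.
apply: span_seq_mulmx_sub => q /mem_take_krylov_list [k' [l' [lt_k'n lt_pos ->]]] /=.
rewrite -krylov_vecS; apply: span_seq_sup (l', x k'.+1 l') _.
by apply: krylov_in_take; have := ltn_ord l; have := ltn_ord l'; nia.
Qed.

Variable kappa : 'I_m -> nat.
Hypothesis kronecker_kappa : forall l, kronecker_indices A B l = kappa l.

Lemma selectedE k l : (k < n)%N -> selected k l = (k < kappa l)%N.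
Proof.
move=> lt_kn; rewrite -kronecker_kappa kronecker_indices_selected.
by apply: (initial_segment_sumE (f := selected^~ l)) => // k'; exact: selected_succ.
Qed.

(* A vector that is not selected lies in the span of its predecessors; induct on the position. *)
Lemma krylov_sub_selected p (X : 'M[K]_(p, n)) t :
  (forall k (l : 'I_m), (k < n)%N -> (k * m + l < t)%N -> (k < kappa l)%N -> (x k l <= X)%MS) ->
  forall k (l : 'I_m), (k < n)%N -> (k * m + l < t)%N -> (x k l <= X)%MS.
Proof.
move=> sel_sub k l; have [N] := ubnP (k * m + l)%N; elim: N k l => [//|N IHN] k l.
move=> lt_pos lt_kn lt_t; case lt_k: (k < kappa l)%N; first exact: sel_sub.
have : ~~ selected k l by rewrite selectedE // lt_k.
rewrite /selected negbK => x_sub; apply: submx_trans x_sub _.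
apply: span_seq_sub => q /mem_take_krylov_list [k' [l' [lt_k'n lt_pos' ->]]] /=.
by apply: IHN => //; lia.
Qed.

End Selection.

Section CanonicalPair.
Variables (K : fieldType) (m n : nat) (kappa : 'I_m -> nat).
Hypothesis sum_kappa : (\sum_(i < m) kappa i)%N = n.

Local Notation offset := (kappa_offset kappa).
Local Notation Ak := (@A_kappa K n m kappa).
Local Notation Bk := (@B_kappa K n m kappa).

Lemma B_kappa_entry (r : 'I_n) i i' : in_block kappa i r ->
  Bk r i' = ((i' == i) && (r == offset i :> nat))%:R.
Proof.
move=> r_i; rewrite mxE; have [->|neq_i'i] := eqVneq i' i.
  by rewrite -lt0n (in_block_kappa_gt0 r_i) /=; case: eqP.
case: ifP => // /andP[kappa_i' /eqP r_off]; case/eqP: neq_i'i.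
apply: (in_block_inj _ r_i).
by rewrite r_off -[kappa_offset kappa i']addn0 in_block_offsetD // lt0n.
Qed.

Lemma B_kappa_mul (r : 'I_n) i p (Y : 'M[K]_(m, p)) c : in_block kappa i r ->
  (Bk *m Y) r c = if r == offset i :> nat then Y i c else 0.
Proof.
move=> r_i; rewrite mxE (bigD1 i) //= big1 => [|i' neq_i'i].
  by rewrite (B_kappa_entry _ r_i) eqxx /=; case: ifP; rewrite ?mul1r ?mul0r addr0.
by rewrite (B_kappa_entry _ r_i) (negbTE neq_i'i) mul0r.
Qed.

Lemma B_kappa_tr_mul (r : 'I_n) i p (Y : 'M[K]_(n, p)) c :
  in_block kappa i r -> r = offset i :> nat -> (Bk^T *m Y) i c = Y r c.
Proof.
move=> r_i r_off; rewrite mxE (bigD1 r) //= big1 => [|r' neq_r'r].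
  by rewrite mxE (B_kappa_entry _ r_i) eqxx r_off eqxx mul1r addr0.
rewrite !mxE (_ : r' == offset i :> nat = false) ?andbF ?mul0r //.
by apply: contraNF neq_r'r => /eqP r'_off; apply/eqP/val_inj; rewrite /= r'_off.
Qed.

Lemma A_kappa_entry (r r' : 'I_n) i : in_block kappa i r ->
  Ak r r' = ((r' == (r - 1)%N :> nat) && (offset i < r)%N)%:R.
Proof.
move=> r_i; rewrite mxE.
have [r_eq|r_neq] := eqVneq (r : nat) r'.+1; last first.
  rewrite /=; case: eqP => //= r'_eq; suff -> : (offset i < r)%N = false by [].
  by apply/negbTE; rewrite -leqNgt; move: r_neq; rewrite r'_eq; lia.
rewrite r_eq subn1 /= eqxx /=; case: existsP => [[i' /andP[le_i' lt_i']]|no_block].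
  have r_i' : in_block kappa i' r by rewrite /in_block r_eq; lia.
  by rewrite -(in_block_inj r_i' r_i); have -> : (offset i' < r'.+1)%N by lia.
suff -> : (offset i < r'.+1)%N = false by [].
apply/negbTE/negP => lt_r; case: no_block; exists i; move: r_i lt_r; rewrite /in_block r_eq; lia.
Qed.

End CanonicalPair.

Section Luenberger.
Variables (K : fieldType) (m n : nat) (kappa : 'I_m -> nat).
Hypothesis sum_kappa : (\sum_(i < m) kappa i)%N = n.

Local Notation offset := (kappa_offset kappa).
Local Notation blk := (block_of sum_kappa).
Local Notation Ak := (@A_kappa K n m kappa).
Local Notation Bk := (@B_kappa K n m kappa).

(* The chains [x 0 i, ..., x (kappa i - 1) i] stacked block after block. *)
Definition basis_mx (A : 'M[K]_n) (B : 'M[K]_(n, m)) : 'M[K]_n :=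
  \matrix_(r, c) krylov_vec A B (r - offset (blk r)) (blk r) 0 c.

Definition block_last_vec (i : 'I_m) : 'cV[K]_n :=
  \col_c (c == (offset i + kappa i - 1)%N :> nat)%:R.

Definition dual_vec A B i : 'cV[K]_n := invmx (basis_mx A B) *m block_last_vec i.

Definition luenberger_T A B : 'M[K]_n :=
  \matrix_(r, c) ((dual_vec A B (blk r))^T *m
                  A ^+ (kappa (blk r) - 1 - (r - offset (blk r)))) 0 c.

Definition luenberger_S A (B : 'M[K]_(n, m)) : 'M[K]_m :=
  \matrix_(i, l) if kappa i != 0%N then ((dual_vec A B i)^T *m A ^+ (kappa i - 1) *m B) 0 l
                 else (i == l)%:R.

Definition luenberger_F A B : 'M[K]_(m, n) := Bk^T *m (luenberger_T A B *m A).

Section FixedPair.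
Variables (A : 'M[K]_n) (B : 'M[K]_(n, m)).
Hypothesis kronecker_kappa : forall l, kronecker_indices A B l = kappa l.

Local Notation x := (krylov_vec A B).
Local Notation U := (basis_mx A B).
Local Notation q := (dual_vec A B).
Local Notation T := (luenberger_T A B).
Local Notation S := (luenberger_S A B).
Local Notation F := (luenberger_F A B).

Lemma row_basis_mx (r : 'I_n) i : in_block kappa i r -> row r U = x (r - offset i) i.
Proof. by move=> r_i; apply/rowP => c; rewrite !mxE (block_of_eq sum_kappa r_i). Qed.

Lemma krylov_vec_row_basis l k (lt_kn : (offset l + k < n)%N) :
  (k < kappa l)%N -> x k l = row (Ordinal lt_kn) U.
Proof.
move=> lt_k; have r_l : in_block kappa l (Ordinal lt_kn) := in_block_offsetD lt_k.
by rewrite (row_basis_mx r_l) /= addKn.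
Qed.

Lemma krylov_vec_sub_basis k l : (k < n)%N -> (x k l <= U)%MS.
Proof.
move=> lt_kn; have lt_pos : (k * m + l < n * m)%N by have := ltn_ord l; nia.
move: lt_kn lt_pos; apply: (krylov_sub_selected kronecker_kappa) => k' l' _ _ lt_k'.
have lt_n : (offset l' + k' < n)%N by apply: (in_block_lt sum_kappa (in_block_offsetD lt_k')).
by rewrite (krylov_vec_row_basis lt_n) // row_sub.
Qed.

Lemma basis_mx_unit : U \in unitmx.
Proof.
rewrite -row_free_unit /row_free eqn_leq rank_leq_row /=.
have rank_L : \rank (span_seq (krylov_list A B)) = n.
  have := rank_greedy_select (krylov_list A B) 0.
  rewrite adds0mx mxrank0 add0n => ->; rewrite (count_sum_fst (I := 'I_m)).
  by rewrite -[RHS]sum_kappa; apply: eq_bigr => l _; rewrite -kronecker_kappa.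
rewrite -{1}rank_L; apply/mxrankS/span_seq_sub => p'.
rewrite -[krylov_list A B]take_size => /mem_take_krylov_list [k [l [lt_kn _ ->]]].
exact: krylov_vec_sub_basis.
Qed.

Lemma row_basis_dual (r : 'I_n) i : row r U *m q i = row r (block_last_vec i).
Proof. by rewrite /dual_vec mulmxA -row_mul mulmxV ?basis_mx_unit // -row_mul mul1mx. Qed.

(* The Krylov vectors preceding [x (kappa i - 1) i] lie in the span of the rows of [U]
   other than row [offset i + kappa i - 1], which [q i] annihilates. *)
Lemma dual_vec_orthogonal i k (l : 'I_m) : (0 < kappa i)%N -> (k < n)%N ->
  (k * m + l < (kappa i - 1) * m + i)%N -> x k l *m q i = 0.
Proof.
move=> kappa_i lt_kn lt_pos; apply/eqP; rewrite -sub_kermx.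
move: lt_kn lt_pos; apply: (krylov_sub_selected kronecker_kappa) => k' l' _ lt_pos lt_k'.
have lt_n : (offset l' + k' < n)%N by apply: (in_block_lt sum_kappa (in_block_offsetD lt_k')).
rewrite (krylov_vec_row_basis lt_n) // sub_kermx row_basis_dual; apply/eqP/rowP => j.
rewrite !mxE /=; case: eqP => // last_eq.
have r_i : in_block kappa i (offset l' + k') by rewrite /in_block last_eq; lia.
by move: last_eq lt_pos; rewrite (in_block_inj (in_block_offsetD lt_k') r_i); lia.
Qed.

Lemma dual_vec_last i : (0 < kappa i)%N -> x (kappa i - 1) i *m q i = 1.
Proof.
move=> kappa_i.
have lt_n : (offset i + (kappa i - 1) < n)%N.
  by apply: (in_block_lt sum_kappa); apply: in_block_offsetD; lia.
rewrite (krylov_vec_row_basis lt_n); last lia.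
by rewrite row_basis_dual; apply/rowP => j; rewrite !mxE /= ord1 eqxx /=; case: eqP => //; lia.
Qed.

Lemma dual_krylov_coef i k (l : 'I_m) :
  ((q i)^T *m A ^+ k *m B) 0 l = (x k l *m q i) 0 0.
Proof.
have tr11 (M : 'M[K]_1) : M 0 0 = M^T 0 0 by rewrite mxE.
by rewrite tr11 [in RHS]trmx_mul /krylov_vec trmxK colE !mulmxA -colE [RHS]mxE.
Qed.

Lemma row_luenberger_T (r : 'I_n) i : in_block kappa i r ->
  row r T = (q i)^T *m A ^+ (kappa i - 1 - (r - offset i)).
Proof. by move=> r_i; apply/rowP => c; rewrite !mxE (block_of_eq sum_kappa r_i). Qed.

Lemma luenberger_S_lower (i l : 'I_m) : (l < i)%N -> S i l = 0.
Proof.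
move=> lt_li; rewrite mxE; case: ifP => [kappa_i|_]; last first.
  by rewrite (_ : i == l = false) //; apply/negbTE; apply: contraTneq lt_li => ->; rewrite ltnn.
rewrite -lt0n in kappa_i; rewrite dual_krylov_coef dual_vec_orthogonal ?mxE //.
  by have := kappa_le sum_kappa i; lia.
lia.
Qed.

Lemma luenberger_S_diag (i : 'I_m) : S i i = 1.
Proof.
rewrite mxE; case: ifP => [kappa_i|_]; last by rewrite eqxx.
by rewrite dual_krylov_coef dual_vec_last ?mxE // lt0n.
Qed.

Lemma luenberger_S_unit : S \in unitmx.
Proof.
rewrite unitmxE -det_tr det_trig.
  by rewrite big1 ?unitr1 // => i _; rewrite mxE luenberger_S_diag.
by apply/is_trig_mxP => i j lt_ij; rewrite mxE luenberger_S_lower.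
Qed.

Lemma luenberger_TB : T *m B = Bk *m S.
Proof.
apply/matrixP => r l; have [i r_i] := in_block_exists sum_kappa (ltn_ord r).
have kappa_i := in_block_kappa_gt0 r_i.
have -> : (T *m B) r l = (row r (T *m B)) 0 l by rewrite [RHS]mxE.
rewrite (B_kappa_mul _ _ r_i) row_mul (row_luenberger_T r_i) dual_krylov_coef.
case: eqP => [r_off|r_off].
  by rewrite [RHS]mxE -lt0n kappa_i dual_krylov_coef r_off subnn subn0.
rewrite dual_vec_orthogonal ?mxE //; first by have := kappa_le sum_kappa i; lia.
by move: r_i r_off; rewrite /in_block; have := ltn_ord l; have := ltn_ord i; nia.
Qed.

Lemma luenberger_TA : T *m A - Ak *m T = Bk *m F.
Proof.
apply/matrixP => r c; have [i r_i] := in_block_exists sum_kappa (ltn_ord r).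
have TA_rc : (T *m A) r c = ((q i)^T *m A ^+ (kappa i - 1 - (r - offset i)).+1) 0 c.
  have -> : (T *m A) r c = (row r (T *m A)) 0 c by rewrite [RHS]mxE.
  by rewrite row_mul (row_luenberger_T r_i) -mulmxA mulmxE -exprSr.
have -> : (T *m A - Ak *m T) r c = (T *m A) r c - (Ak *m T) r c by rewrite !mxE.
rewrite (B_kappa_mul _ _ r_i) [(Ak *m T) r c]mxE; case: eqP => [r_off|r_off].
  rewrite /luenberger_F (B_kappa_tr_mul _ _ r_i r_off) big1 ?subr0 // => r' _.
  by rewrite (A_kappa_entry _ sum_kappa _ r_i) r_off ltnn andbF mul0r.
have lt_r1 : (r - 1 < n)%N by have := ltn_ord r; lia.
have lt_off : (offset i < r)%N by move: r_i r_off; rewrite /in_block; lia.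
rewrite (bigD1 (Ordinal lt_r1)) //= (A_kappa_entry _ sum_kappa _ r_i) /= eqxx lt_off mul1r.
rewrite big1 ?addr0 => [|r' neq_r'r1]; last first.
  rewrite (A_kappa_entry _ sum_kappa _ r_i); case: eqP; rewrite ?mul0r // => r'_eq.
  by case/eqP: neq_r'r1; apply: val_inj.
have r1_i : in_block kappa i (r - 1) by move: r_i lt_off; rewrite /in_block; lia.
have -> : T (Ordinal lt_r1) c = (row (Ordinal lt_r1) T) 0 c by rewrite [RHS]mxE.
rewrite (row_luenberger_T (r := Ordinal lt_r1) r1_i) /=.
have -> : (kappa i - 1 - (r - 1 - offset i) = (kappa i - 1 - (r - offset i)).+1)%N.
  by move: r_i lt_off; rewrite /in_block; lia.
by rewrite -TA_rc subrr.
Qed.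

Lemma luenberger_T_basis_entry (r c : 'I_n) i l : in_block kappa i r -> in_block kappa l c ->
  (T *m U^T) r c = (x (kappa i - 1 - (r - offset i) + (c - offset l)) l *m q i) 0 0.
Proof.
move=> r_i c_l; have tr11 (M : 'M[K]_1) : M 0 0 = M^T 0 0 by rewrite mxE.
have -> : (T *m U^T) r c = (row r T *m (row c U)^T) 0 0.
  by rewrite !mxE; apply: eq_bigr => k _; rewrite !mxE.
rewrite (row_luenberger_T r_i) (row_basis_mx c_l) [RHS]tr11 [in RHS]trmx_mul /krylov_vec !trmxK.
by rewrite exprD -mulmxE !mulmxA.
Qed.

(* Position in the Krylov list of the vector forming row [r] of [U]. *)
Definition basis_pos (r : 'I_n) : nat := ((r - offset (blk r)) * m + blk r)%N.

Lemma basis_pos_inj : injective basis_pos.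
Proof.
move=> r r'; rewrite /basis_pos => pos_eq.
have m_gt0 : (0 < m)%N by case: (m) (blk r) => [[]|].
have := congr1 (modn^~ m) pos_eq; have := congr1 (divn^~ m) pos_eq.
rewrite /= !modnMDl !divnMDl // !modn_small // !divn_small // !addn0 => k_eq blk_eq.
have {}blk_eq : blk r = blk r' by apply: val_inj.
have := block_ofP sum_kappa r; have := block_ofP sum_kappa r'.
by rewrite -blk_eq /in_block => r'_blk r_blk; apply: ord_inj; move: k_eq; rewrite -blk_eq; lia.
Qed.

Lemma luenberger_T_unit : T \in unitmx.
Proof.
suff : (T *m U^T) \in unitmx by rewrite unitmx_mul => /andP[].
rewrite unitmxE (det_trig_key basis_pos_inj) => [|r c lt_pos]; last first.
  have r_i := block_ofP sum_kappa r; have c_l := block_ofP sum_kappa c.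
  rewrite (luenberger_T_basis_entry r_i c_l) dual_vec_orthogonal ?mxE //.
  - exact: in_block_kappa_gt0 r_i.
  - move: lt_pos r_i c_l; rewrite /basis_pos /in_block.
    have := ltn_ord (blk r); have := ltn_ord (blk c); have := kappa_le sum_kappa (blk r); nia.
  - move: lt_pos r_i c_l; rewrite /basis_pos /in_block.
    have := ltn_ord (blk r); have := ltn_ord (blk c); nia.
rewrite big1 ?unitr1 // => r _; have r_i := block_ofP sum_kappa r.
have kappa_i := in_block_kappa_gt0 r_i.
rewrite (luenberger_T_basis_entry r_i r_i) (_ : (_ + _ = kappa (blk r) - 1)%N).
  by rewrite dual_vec_last ?mxE.
by move: r_i; rewrite /in_block; lia.
Qed.

End FixedPair.
End Luenberger.

Section LuenbergerContinuity.
Context {K : numFieldType} {D : Type} {F : set_system D} {FF : Filter F}.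
Variables (m n : nat) (kappa : 'I_m -> nat).
Hypothesis sum_kappa : (\sum_(i < m) kappa i)%N = n.
Variables (A : D -> 'M[K]_n) (B : D -> 'M[K]_(n, m)) (A0 : 'M[K]_n) (B0 : 'M[K]_(n, m)).
Hypotheses (cvgA : A @ F --> A0) (cvgB : B @ F --> B0).
Hypothesis basis0_unit : basis_mx sum_kappa A0 B0 \in unitmx.

Lemma cvg_krylov_vec k l :
  (fun t => krylov_vec (A t) (B t) k l) @ F --> krylov_vec A0 B0 k l.
Proof. by apply: cvg_trmx; apply: cvg_mulmx; [exact: cvg_mxexp | exact: cvg_col]. Qed.

Lemma cvg_basis_mx : (fun t => basis_mx sum_kappa (A t) (B t)) @ F --> basis_mx sum_kappa A0 B0.
Proof. by apply: cvg_matrix => r c; exact: cvg_mx_entry (cvg_krylov_vec (k := _) (l := _)). Qed.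

Lemma cvg_dual_vec i :
  (fun t => dual_vec sum_kappa (A t) (B t) i) @ F --> dual_vec sum_kappa A0 B0 i.
Proof. by apply: cvg_mulmx; [exact: cvg_invmx cvg_basis_mx | exact: cvg_cst]. Qed.

Lemma cvg_luenberger_T :
  (fun t => luenberger_T sum_kappa (A t) (B t)) @ F --> luenberger_T sum_kappa A0 B0.
Proof.
apply: cvg_matrix => r c; apply: cvg_mx_entry.
exact: cvg_mulmx (cvg_trmx (cvg_dual_vec (i := _))) (cvg_mxexp (k := _) cvgA).
Qed.

Lemma cvg_luenberger_S :
  (fun t => luenberger_S sum_kappa (A t) (B t)) @ F --> luenberger_S sum_kappa A0 B0.
Proof.
apply: cvg_matrix => i l; case: ifP => _; last exact: cvg_cst.
apply: cvg_mx_entry; apply: cvg_mulmx cvgB.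
exact: cvg_mulmx (cvg_trmx (cvg_dual_vec (i := _))) (cvg_mxexp (k := _) cvgA).
Qed.

Lemma cvg_luenberger_F :
  (fun t => luenberger_F sum_kappa (A t) (B t)) @ F --> luenberger_F sum_kappa A0 B0.
Proof. exact: cvg_mulmx (cvg_cst _) (cvg_mulmx cvg_luenberger_T cvgA). Qed.

End LuenbergerContinuity.

Lemma feedback_act_canonical (R : realType) n m (T A Ak : 'M[R[i]]_n)
    (F : 'M[R[i]]_(m, n)) (S : 'M[R[i]]_m) (B Bk : 'M[R[i]]_(n, m)) :
  T \in unitmx -> S \in unitmx ->
  T *m A - Ak *m T = Bk *m F -> T *m B = Bk *m S ->
  feedback_act_A T F S A B = Ak /\ feedback_act_B T S B = Bk.
Proof.
move=> T_unit S_unit TA TB; rewrite /feedback_act_A /feedback_act_B TB mulmxK //.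
split=> //; rewrite mulmxBr !mulmxA TB mulmxK // -TA.
by rewrite opprB addrC subrK mulmxK.
Qed.

Theorem mainTheorem1 (R : realType) (n m : nat) (P : set R[i])
    (A : R[i] -> 'M[R[i]]_n) (B : R[i] -> 'M[R[i]]_(n, m))
    (kappa : 'I_m -> nat) :
  jordan_arc P ->
  {within P, continuous A} ->
  {within P, continuous B} ->
  (forall theta, P theta -> forall i : 'I_m, kronecker_indices (A theta) (B theta) i = kappa i) ->
  (\sum_(i < m) kappa i)%N = n ->
  exists (T : R[i] -> 'M[R[i]]_n) (F : R[i] -> 'M[R[i]]_(m, n))
         (S : R[i] -> 'M[R[i]]_m),
    restricted_feedback_transformation P T F S /\
    forall theta, P theta ->
      feedback_act_A (T theta) (F theta) (S theta) (A theta) (B theta)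
        = @A_kappa R[i] n m kappa /\
      feedback_act_B (T theta) (S theta) (B theta) = @B_kappa R[i] n m kappa.
Proof.
move=> _ /subspace_continuousP cA /subspace_continuousP cB kappaE sum_kappa.
exists (fun t => luenberger_T sum_kappa (A t) (B t)), (fun t => luenberger_F sum_kappa (A t) (B t)),
  (fun t => luenberger_S sum_kappa (A t) (B t)).
have U_unit t : P t -> basis_mx sum_kappa (A t) (B t) \in unitmx.
  move=> Pt; exact: (basis_mx_unit (K := R[i]) sum_kappa (kappaE t Pt)).
split; last first.
  move=> t Pt; apply: feedback_act_canonical.
  - exact: (luenberger_T_unit (K := R[i]) sum_kappa) (kappaE t Pt).
  - exact: (luenberger_S_unit (K := R[i]) sum_kappa) (kappaE t Pt).
  - exact: luenberger_TA.
  - exact: (luenberger_TB (K := R[i]) sum_kappa) (kappaE t Pt).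
split; try apply/subspace_continuousP => t Pt.
- exact: cvg_luenberger_T (cA t Pt) (cB t Pt) (U_unit t Pt).
- exact: cvg_luenberger_F (cA t Pt) (cB t Pt) (U_unit t Pt).
- exact: cvg_luenberger_S (cA t Pt) (cB t Pt) (U_unit t Pt).
move=> t Pt; have kappa_t := kappaE t Pt; split.
- exact: (luenberger_T_unit (K := R[i]) sum_kappa) kappa_t.
- exact: (luenberger_S_lower (K := R[i]) sum_kappa kappa_t).
- exact: (luenberger_S_diag (K := R[i]) sum_kappa kappa_t).
Qed.
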